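(* Let $n\ge 1$, $N=n^2$, and let $Q$ be an $n\times n$ square block of grid cells. For every bijection $\pi:Q\to Q$ there is a set $O$ of $4N+1$ obstacle cells, all contained in a $(3N+1)\times(3N+1)$ square region of the grid that also contains $Q$, with the following property. Place $N$ robots on the cells of $Q$ (one per cell) with the obstacle set $O$, and apply the four force-field moves $\langle u,r,d,l\rangle$ in this order. Then, for every $c\in Q$, the robot that started at $c$ ends at cell $\pi(c)$. Moreover, if every robot moves at speed $v$ cells per second, the four moves are completed within total time $10N/v$.
   Context: Model. The workspace is the integer grid $\mathbb{Z}^2$ of unit cells. A configuration consists of a finite set $O\subset\mathbb{Z}^2$ of fixed obstacle cells and finitely many labeled robots, each occupying one cell, with no two robots in the same cell and no robot on an obstacle cell. There are four commands $u,r,d,l$ with direction vectors $e_u=(0,1)$, $e_r=(1,0)$, $e_d=(0,-1)$, $e_l=(-1,0)$. Applying command $x$ (a force-field move) moves all robots simultaneously in direction $e_x$ as far as possible, each stopping when it hits an obstacle or a stopped robot: precisely, for a robot at cell $p$, let $q=p+s e_x$ ($s\ge1$) be the first obstacle cell on the ray $p+te_x$, $t=1,2,\dots$; the robot ends at cell $q-(k+1)e_x$, where $k$ is the number of robots located at cells $p+te_x$ with $0<t<s$. (The move is only considered when each such ray meets an obstacle.) A move sequence such as $\langle u,r,d,l\rangle$ means applying these commands one after another. *)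

From Stdlib Require Import ZArith List Reals Lia.
Open Scope Z_scope.

Definition cell := (Z * Z)%type.

Inductive cmd := Cu | Cr | Cd | Cl.

Definition dirv (x : cmd) : cell :=
  match x with
  | Cu => (0, 1) | Cr => (1, 0) | Cd => (0, -1) | Cl => (-1, 0)
  end.

Definition addc (p : cell) (t : Z) (e : cell) : cell :=
  (fst p + t * fst e, snd p + t * snd e).

Definition cell_eqb (c c' : cell) : bool :=
  Z.eqb (fst c) (fst c') && Z.eqb (snd c) (snd c').

Definition first_obstacle (O : list cell) (p e : cell) (s : Z) : Prop :=
  1 <= s /\ In (addc p s e) O /\
  (forall t, 1 <= t < s -> ~ In (addc p t e) O).

(* c = p + t e for some 0 < t < s  (e a unit axis vector) *)
Definition on_open_seg (p e : cell) (s : Z) (c : cell) : bool :=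
  let t := (fst c - fst p) * fst e + (snd c - snd p) * snd e in
  (0 <? t) && (t <? s) && cell_eqb c (addc p t e).

Definition count_between (conf : list cell) (p e : cell) (s : Z) : nat :=
  length (filter (on_open_seg p e s) conf).

(* A configuration of labeled robots is a list of cells: robot i is at
   position [nth i conf]. [step O x conf conf'] : applying command x to
   conf (with obstacle set O) is defined (every ray meets an obstacle) and
   yields conf'. Robot at p ends at q - (k+1) e = p + (s-k-1) e. *)
Definition step (O : list cell) (x : cmd) (conf conf' : list cell) : Prop :=
  length conf' = length conf /\
  forall i, (i < length conf)%nat ->
    let p := nth i conf (0, 0) in
    exists s, first_obstacle O p (dirv x) s /\
      nth i conf' (0, 0) =
        addc p (s - Z.of_nat (count_between conf p (dirv x) s) - 1) (dirv x).

Definition dist (c c' : cell) : Z :=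
  Z.abs (fst c - fst c') + Z.abs (snd c - snd c').

Definition maxdisp (conf conf' : list cell) : Z :=
  fold_right Z.max 0 (map (fun pr => dist (fst pr) (snd pr)) (combine conf conf')).

Definition move_time (v : R) (conf conf' : list cell) : R :=
  (IZR (maxdisp conf conf') / v)%R.

Definition in_block (a b : Z) (n : nat) (c : cell) : Prop :=
  a <= fst c < a + Z.of_nat n /\ b <= snd c < b + Z.of_nat n.

Definition block_list (a b : Z) (n : nat) : list cell :=
  flat_map (fun i => map (fun j => (a + Z.of_nat i, b + Z.of_nat j)) (seq 0 n))
           (seq 0 n).

Definition in_square (x0 y0 : Z) (m : Z) (c : cell) : Prop :=
  x0 <= fst c <= x0 + m /\ y0 <= snd c <= y0 + m.

(* Number the sources column by column, source_index (a+i, b+j) = i*n + j, and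
   the targets row by row, target_index (a+i, b+j) = j*n + i; both are
   bijections of Q onto [0, N).  The obstacles are placed so that
   - u: each column of Q stacks up below a stopper, and the robot from c ends
     alone on row parking_row c = b + n + source_index c;
   - r: each robot slides right to target_column (pi c) = a + n + 2 *
     target_index (pi c), stopped by an obstacle just right of that column;
   - d: each robot, alone in its column since pi is injective, drops onto an
     obstacle just below its target cell pi c;
   - l: in each row of Q the target columns increase with the x-coordinate
     of the target, so the robots stack against a wall at column a - 1 in
     the order of their targets (all targets being hit, pi being onto) and
     each robot ends on its target.
   Padding cells below the wall make the obstacle count exactly 4N + 1; every
   robot moves at most N cells in u and 3N in each other move, hence 10N.
   The file first proves generic facts on integer ranges, the block
   enumeration, counting robots in front of a mover and move times; then, in
   a section fixing Q and pi, the geometry of the obstacles and one lemma per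
   move; theorem1 assembles them. *)
From Pilot Require Import Defs.
From Stdlib Require Import ZArith List Reals Lia Permutation.
Open Scope Z_scope.

Definition zseq (k : nat) : list Z := map Z.of_nat (seq 0 k).

Lemma in_zseq k i : In i (zseq k) <-> 0 <= i < Z.of_nat k.
Proof.
  unfold zseq; rewrite in_map_iff; split.
  - intros [u [<- Hu]]; apply in_seq in Hu; lia.
  - intros Hi; exists (Z.to_nat i); split; [lia | apply in_seq; lia].
Qed.

Lemma NoDup_zseq k : NoDup (zseq k).
Proof.
  apply NoDup_map_NoDup_ForallPairs; [intros u w _ _; lia | apply seq_NoDup].
Qed.

Lemma length_zseq k : length (zseq k) = k.
Proof. unfold zseq; now rewrite length_map, length_seq. Qed.

Lemma NoDup_flat_map_disjoint {A B} (f : A -> list B) (l : list A) :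
  NoDup l -> (forall x, In x l -> NoDup (f x)) ->
  (forall x y z, In x l -> In y l -> In z (f x) -> In z (f y) -> x = y) ->
  NoDup (flat_map f l).
Proof.
  induction l as [|x l IH]; intros Hl Hf Hdisj; simpl; [constructor|].
  apply NoDup_cons_iff in Hl as [Hx Hl].
  apply NoDup_app.
  - apply Hf; now left.
  - apply IH; [exact Hl | intros; apply Hf; now right |].
    intros u w z Hu Hw; apply Hdisj; now right.
  - intros z Hz Hz'. apply in_flat_map in Hz' as [y [Hy Hzy]].
    assert (x = y) as <- by (apply (Hdisj x y z); simpl; auto). contradiction.
Qed.

Lemma in_block_list a b n c : In c (block_list a b n) <-> in_block a b n c.
Proof.
  unfold block_list, in_block. rewrite in_flat_map. split.
  - intros [i [Hi Hc]]. apply in_map_iff in Hc as [j [<- Hj]].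
    apply in_seq in Hi; apply in_seq in Hj. simpl. lia.
  - destruct c as [x y]; simpl; intros H.
    exists (Z.to_nat (x - a)). split; [apply in_seq; lia|].
    apply in_map_iff. exists (Z.to_nat (y - b)). split; [f_equal; lia | apply in_seq; lia].
Qed.

Lemma NoDup_block_list a b n : NoDup (block_list a b n).
Proof.
  apply NoDup_flat_map_disjoint; [apply seq_NoDup | |].
  - intros i _. apply NoDup_map_NoDup_ForallPairs; [|apply seq_NoDup].
    intros j j' _ _ E. injection E; lia.
  - intros i i' z _ _ Hz Hz'.
    apply in_map_iff in Hz as [j [<- _]]. apply in_map_iff in Hz' as [j' [E _]].
    injection E; lia.
Qed.

Lemma length_block_list a b n : length (block_list a b n) = (n * n)%nat.
Proof.
  unfold block_list. rewrite (flat_map_constant_length (c := n)), length_seq; [reflexivity|].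
  intros; now rewrite length_map, length_seq.
Qed.

Lemma on_open_seg_iff p x s c :
  on_open_seg p (dirv x) s c = true <-> exists t, 0 < t < s /\ c = addc p t (dirv x).
Proof.
  destruct p as [p1 p2], c as [c1 c2].
  unfold on_open_seg, addc, cell_eqb.
  rewrite !Bool.andb_true_iff, !Z.ltb_lt, !Z.eqb_eq.
  destruct x; cbn [dirv fst snd]; split.
  all: first
    [ intros [[? ?] [? ?]]; eexists; split; [split; eassumption | f_equal; lia]
    | intros [t [? E]]; injection E as -> ->; repeat split; lia ].
Qed.

Lemma count_between_offsets conf p x s (ts : list Z) :
  NoDup conf -> NoDup ts ->
  (forall t, In t ts <-> 0 < t < s /\ In (addc p t (dirv x)) conf) ->
  count_between conf p (dirv x) s = length ts.
Proof.
  intros Hconf Hts Hspec. unfold count_between.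
  rewrite <- (length_map (fun t => addc p t (dirv x)) ts).
  apply Permutation_length, NoDup_Permutation.
  - now apply NoDup_filter.
  - apply NoDup_map_NoDup_ForallPairs; [|exact Hts].
    intros t t' _ _ E. destruct p, x; unfold addc in E; cbn in E; injection E; lia.
  - intros c. rewrite filter_In, on_open_seg_iff, in_map_iff. split.
    + intros [Hc [t [Ht ->]]]. exists t. split; [reflexivity | apply Hspec; auto].
    + intros [t [<- Ht]]. apply Hspec in Ht as [Ht Hin]. split; [exact Hin | now exists t].
Qed.

Lemma count_between_none conf p x s :
  (forall t, 0 < t < s -> ~ In (addc p t (dirv x)) conf) ->
  count_between conf p (dirv x) s = 0%nat.
Proof.
  intros Hfree. unfold count_between.
  destruct (filter (on_open_seg p (dirv x) s) conf) as [|c l] eqn:E; [reflexivity|].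
  assert (Hc : In c (filter (on_open_seg p (dirv x) s) conf)) by (rewrite E; now left).
  apply filter_In in Hc as [Hin Hseg]. apply on_open_seg_iff in Hseg as [t [Ht ->]].
  exfalso; exact (Hfree t Ht Hin).
Qed.

Lemma step_of_map O x (l : list cell) (F G : cell -> cell) :
  (forall c, In c l -> exists s, first_obstacle O (F c) (dirv x) s /\
     G c = addc (F c) (s - Z.of_nat (count_between (map F l) (F c) (dirv x) s) - 1) (dirv x)) ->
  step O x (map F l) (map G l).
Proof.
  intros Hrobot. split; [now rewrite !length_map|].
  intros i Hi. rewrite length_map in Hi.
  rewrite (nth_indep _ _ (F (0, 0))), (nth_indep (map G l) _ (G (0, 0))) by now rewrite length_map.
  rewrite !map_nth. apply Hrobot, nth_In, Hi.
Qed.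

Lemma maxdisp_le (l : list cell) (F G : cell -> cell) (B : Z) : 0 <= B ->
  (forall c, In c l -> Pilot.Defs.dist (F c) (G c) <= B) -> maxdisp (map F l) (map G l) <= B.
Proof.
  intros HB Hdist. unfold maxdisp.
  induction l as [|c l IH]; simpl; [lia|].
  apply Z.max_lub; [apply Hdist; now left | apply IH; intros; apply Hdist; now right].
Qed.

Lemma move_times_le (v : R) c0 c1 c2 c3 c4 (B : Z) : (0 < v)%R ->
  maxdisp c0 c1 + maxdisp c1 c2 + maxdisp c2 c3 + maxdisp c3 c4 <= B ->
  (move_time v c0 c1 + move_time v c1 c2 + move_time v c2 c3 + move_time v c3 c4
   <= IZR B / v)%R.
Proof.
  intros Hv HB. unfold move_time, Rdiv.
  rewrite <- !Rmult_plus_distr_r, <- !plus_IZR.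
  apply Rmult_le_compat_r; [left; now apply Rinv_0_lt_compat | now apply IZR_le].
Qed.

Lemma digits_unique m i j i' j' :
  0 <= j < m -> 0 <= j' < m -> i * m + j = i' * m + j' -> i = i' /\ j = j'.
Proof.
  intros Hj Hj' E. destruct (Z.lt_trichotomy i i') as [Hlt|[->|Hlt]].
  - assert (i * m + m <= i' * m) by nia. lia.
  - lia.
  - assert (i' * m + m <= i * m) by nia. lia.
Qed.

Section Construction.

Variables (a b : Z) (n : nat) (pi : cell -> cell).
Hypothesis n_pos : (1 <= n)%nat.
Hypothesis pi_maps : forall c, in_block a b n c -> in_block a b n (pi c).
Hypothesis pi_inj :
  forall c c', in_block a b n c -> in_block a b n c' -> pi c = pi c' -> c = c'.
Hypothesis pi_onto :
  forall c', in_block a b n c' -> exists c, in_block a b n c /\ pi c = c'.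

Local Notation side := (Z.of_nat n).
Local Notation area := (Z.of_nat n * Z.of_nat n).
Local Notation inQ := (in_block a b n).
Local Notation block := (block_list a b n).

Definition source_index (c : cell) : Z := (fst c - a) * side + (snd c - b).
Definition target_index (e : cell) : Z := (snd e - b) * side + (fst e - a).

(* After u, the robot from c is alone on row [parking_row c]; after r it is
   alone in column [target_column (pi c)]. *)
Definition parking_row (c : cell) : Z := b + side + source_index c.
Definition target_column (e : cell) : Z := a + side + 2 * target_index e.

Definition after_up (c : cell) : cell := (fst c, parking_row c).
Definition after_right (c : cell) : cell := (target_column (pi c), parking_row c).
Definition after_down (c : cell) : cell := (target_column (pi c), snd (pi c)).

(* Stopper above column a + i, just above the highest parking row of that column. *)
Definition up_stops : list cell :=
  map (fun i => (a + i, b + side + (i + 1) * side)) (zseq n).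
Definition right_stops : list cell :=
  map (fun c => (target_column (pi c) + 1, parking_row c)) block.
Definition down_stops : list cell :=
  map (fun e => (target_column e, snd e - 1)) block.
Definition left_wall : list cell := map (fun j => (a - 1, b + j)) (zseq n).
(* Cells below the wall, only there to make the obstacle count 4N + 1. *)
Definition padding : list cell :=
  map (fun r => (a - 1, b - 1 - r)) (zseq (2 * (n * n) - 2 * n + 1)).
Definition obstacles : list cell :=
  up_stops ++ right_stops ++ down_stops ++ left_wall ++ padding.

Lemma side_le_area : side <= area.
Proof. nia. Qed.

Lemma source_index_bounds c : inQ c ->
  (fst c - a) * side <= source_index c < (fst c - a) * side + side /\
  0 <= source_index c < area.
Proof. unfold in_block, source_index; intros; nia. Qed.

Lemma target_index_bounds e : inQ e ->
  (snd e - b) * side <= target_index e < (snd e - b) * side + side /\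
  0 <= target_index e < area.
Proof. unfold in_block, target_index; intros; nia. Qed.

Lemma source_index_inj c d : inQ c -> inQ d -> source_index c = source_index d -> c = d.
Proof.
  unfold in_block, source_index; destruct c as [x y], d as [x' y']; simpl.
  intros Hc Hd E. apply digits_unique in E; [f_equal; lia | lia | lia].
Qed.

Lemma target_index_inj e f : inQ e -> inQ f -> target_index e = target_index f -> e = f.
Proof.
  unfold in_block, target_index; destruct e as [x y], f as [x' y']; simpl.
  intros He Hf E. apply digits_unique in E; [f_equal; lia | lia | lia].
Qed.

Lemma in_obstacles c : In c obstacles ->
  (exists i, 0 <= i < side /\ c = (a + i, b + side + (i + 1) * side)) \/
  (exists d, inQ d /\ c = (target_column (pi d) + 1, parking_row d)) \/
  (exists e, inQ e /\ c = (target_column e, snd e - 1)) \/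
  (exists j, 0 <= j < side /\ c = (a - 1, b + j)) \/
  (exists r, 0 <= r <= 2 * area - 2 * side /\ c = (a - 1, b - 1 - r)).
Proof.
  pose proof side_le_area.
  unfold obstacles, up_stops, right_stops, down_stops, left_wall, padding.
  rewrite !in_app_iff, !in_map_iff.
  intros [[i [<- Hi]]|[[d [<- Hd]]|[[e [<- He]]|[[j [<- Hj]]|[r [<- Hr]]]]]];
    rewrite ?in_zseq in *; rewrite ?in_block_list in *.
  - left; exists i; split; [lia | reflexivity].
  - right; left; exists d; auto.
  - right; right; left; exists e; auto.
  - right; right; right; left; exists j; split; [lia | reflexivity].
  - right; right; right; right; exists r; split; [lia | reflexivity].
Qed.

Lemma up_stops_region c : In c up_stops ->
  a <= fst c < a + side /\ b + 2 * side <= snd c <= b + side + area.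
Proof.
  unfold up_stops; rewrite in_map_iff; intros [i [<- Hi]]; apply in_zseq in Hi; cbn [fst snd].
  assert (side <= (i + 1) * side <= area) by (clear - n_pos Hi; nia). lia.
Qed.

Lemma right_stops_region c : In c right_stops ->
  a + side < fst c < a + side + 2 * area /\ b + side <= snd c < b + side + area.
Proof.
  unfold right_stops; rewrite in_map_iff; intros [d [<- Hd]]; apply in_block_list in Hd.
  pose proof (source_index_bounds _ Hd); pose proof (target_index_bounds _ (pi_maps _ Hd)).
  unfold target_column, parking_row; cbn [fst snd]; lia.
Qed.

Lemma down_stops_region c : In c down_stops ->
  a + side <= fst c < a + side + 2 * area /\ b - 1 <= snd c < b + side - 1.
Proof.
  unfold down_stops; rewrite in_map_iff; intros [e [<- He]]; apply in_block_list in He.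
  pose proof (target_index_bounds _ He); destruct He; unfold target_column; cbn [fst snd]; lia.
Qed.

Lemma left_wall_region c : In c left_wall -> fst c = a - 1 /\ b <= snd c < b + side.
Proof.
  unfold left_wall; rewrite in_map_iff; intros [j [<- Hj]]; apply in_zseq in Hj; cbn [fst snd]; lia.
Qed.

Lemma padding_region c : In c padding ->
  fst c = a - 1 /\ b + 2 * side - 1 - 2 * area <= snd c < b.
Proof.
  pose proof side_le_area.
  unfold padding; rewrite in_map_iff; intros [r [<- Hr]]; apply in_zseq in Hr; cbn [fst snd]; lia.
Qed.

Lemma obstacle_region c : In c obstacles ->
  a - 1 <= fst c < a + side + 2 * area /\
  b + 2 * side - 1 - 2 * area <= snd c <= b + side + area /\ ~ inQ c.
Proof.
  pose proof side_le_area as Harea.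
  unfold obstacles, in_block; rewrite !in_app_iff.
  intros [H|[H|[H|[H|H]]]];
    [ apply up_stops_region in H | apply right_stops_region in H
    | apply down_stops_region in H | apply left_wall_region in H
    | apply padding_region in H ]; lia.
Qed.

(* Each family is duplicate-free and their regions are disjoint. *)
Lemma NoDup_obstacles : NoDup obstacles.
Proof.
  unfold obstacles. repeat apply NoDup_app.
  - unfold up_stops; apply NoDup_map_NoDup_ForallPairs; [|apply NoDup_zseq].
    intros i i' _ _ E; injection E; lia.
  - unfold right_stops; apply NoDup_map_NoDup_ForallPairs; [|apply NoDup_block_list].
    intros c d Hc Hd E; injection E as _ E.
    apply in_block_list in Hc, Hd. apply source_index_inj; auto.
    unfold parking_row in E; lia.
  - unfold down_stops; apply NoDup_map_NoDup_ForallPairs; [|apply NoDup_block_list].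
    intros e f He Hf E; injection E as E _.
    apply in_block_list in He, Hf. apply target_index_inj; auto.
    unfold target_column in E; lia.
  - unfold left_wall; apply NoDup_map_NoDup_ForallPairs; [|apply NoDup_zseq].
    intros j j' _ _ E; injection E; lia.
  - unfold padding; apply NoDup_map_NoDup_ForallPairs; [|apply NoDup_zseq].
    intros r r' _ _ E; injection E; lia.
  - intros c H1 H2. apply left_wall_region in H1. apply padding_region in H2. lia.
  - intros c H1 H2. apply down_stops_region in H1. rewrite in_app_iff in H2.
    destruct H2 as [H2|H2]; [apply left_wall_region in H2 | apply padding_region in H2]; lia.
  - intros c H1 H2. apply right_stops_region in H1. rewrite !in_app_iff in H2.
    destruct H2 as [H2|[H2|H2]];
      [apply down_stops_region in H2 | apply left_wall_region in H2
      | apply padding_region in H2]; lia.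
  - intros c H1 H2. apply up_stops_region in H1. rewrite !in_app_iff in H2.
    destruct H2 as [H2|[H2|[H2|H2]]];
      [apply right_stops_region in H2 | apply down_stops_region in H2
      | apply left_wall_region in H2 | apply padding_region in H2]; lia.
Qed.

Lemma length_obstacles : length obstacles = (4 * (n * n) + 1)%nat.
Proof.
  assert (n <= n * n)%nat by nia.
  unfold obstacles, up_stops, right_stops, down_stops, left_wall, padding.
  rewrite !length_app, !length_map, !length_zseq, !length_block_list. lia.
Qed.

(* Move u: the robots of each column stack up below the stopper of that
   column, so the robot from c, with b + n - 1 - snd c robots above it, ends
   on row [parking_row c]. *)
Lemma up_first_obstacle c : inQ c ->
  first_obstacle obstacles c (dirv Cu) (b + side + (fst c - a + 1) * side - snd c).
Proof.
  destruct c as [x y]; intros Hc; pose proof Hc as [Hx Hy]; cbn [fst snd] in *.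
  assert (0 <= (x - a) * side) by (clear - Hx; nia).
  split; [lia | split].
  - apply in_or_app; left. unfold up_stops; apply in_map_iff. exists (x - a).
    split; [unfold addc; cbn [dirv fst snd]; f_equal; lia | apply in_zseq; lia].
  - intros t Ht Hin. apply in_obstacles in Hin; unfold addc in Hin; cbn [dirv fst snd] in Hin.
    destruct Hin as [[i [Hi E]]|[[d [Hd E]]|[[e [He E]]|[[j [Hj E]]|[r [Hr E]]]]]];
      injection E as E1 E2.
    + assert (i = x - a) as -> by lia. lia.
    + pose proof (target_index_bounds _ (pi_maps _ Hd)). unfold target_column in E1. lia.
    + pose proof (target_index_bounds _ He). unfold target_column in E1. lia.
    + lia.
    + lia.
Qed.

Lemma up_count c : inQ c ->
  count_between block c (dirv Cu) (b + side + (fst c - a + 1) * side - snd c)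
  = Z.to_nat (b + side - 1 - snd c).
Proof.
  destruct c as [x y]; intros Hc; pose proof Hc as [Hx Hy]; cbn [fst snd] in *.
  assert (0 <= (x - a) * side) by (clear - Hx; nia).
  rewrite <- (length_zseq (Z.to_nat (b + side - 1 - y))), <- (length_map (fun i => i + 1)).
  apply count_between_offsets; [apply NoDup_block_list | |].
  - apply NoDup_map_NoDup_ForallPairs; [intros i i' _ _; lia | apply NoDup_zseq].
  - intros t. rewrite in_map_iff, in_block_list. unfold in_block, addc; cbn [dirv fst snd].
    split.
    + intros [i [<- Hi]]. apply in_zseq in Hi. lia.
    + intros [Ht Hin]. exists (t - 1). split; [lia | apply in_zseq; lia].
Qed.

Lemma up_move : step obstacles Cu block (map after_up block).
Proof.
  rewrite <- (map_id block) at 1. apply step_of_map; cbv beta.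
  intros c Hc; apply in_block_list in Hc.
  exists (b + side + (fst c - a + 1) * side - snd c).
  split; [now apply up_first_obstacle|].
  rewrite map_id, up_count by exact Hc. destruct Hc as [_ Hy].
  unfold after_up, parking_row, source_index, addc; cbn [dirv fst snd]. f_equal; lia.
Qed.

(* Move r: each robot is alone on its parking row and slides right until the
   stopper just right of its target column. *)
Lemma right_first_obstacle c : inQ c ->
  first_obstacle obstacles (after_up c) (dirv Cr) (target_column (pi c) + 1 - fst c).
Proof.
  intros Hc. pose proof (source_index_bounds _ Hc) as Hsrc.
  pose proof (target_index_bounds _ (pi_maps _ Hc)) as Htgt. pose proof Hc as [Hx Hy].
  unfold after_up. split; [unfold target_column; lia | split].
  - apply in_or_app; right; apply in_or_app; left. unfold right_stops; apply in_map_iff.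
    exists c. split; [unfold addc; cbn [dirv fst snd]; f_equal; lia | now apply in_block_list].
  - intros t Ht Hin. apply in_obstacles in Hin; unfold addc in Hin; cbn [dirv fst snd] in Hin.
    destruct Hin as [[i [Hi E]]|[[d [Hd E]]|[[e [He E]]|[[j [Hj E]]|[r [Hr E]]]]]];
      injection E as E1 E2.
    + assert ((fst c - a + 1) * side <= i * side) by (clear - Hx Hi E1 Ht; nia).
      unfold parking_row in E2; lia.
    + assert (d = c) as -> by (apply source_index_inj; auto; unfold parking_row in E2; lia).
      lia.
    + destruct He as [_ He]. unfold parking_row in E2; lia.
    + lia.
    + lia.
Qed.

Lemma right_count c : inQ c ->
  count_between (map after_up block) (after_up c) (dirv Cr) (target_column (pi c) + 1 - fst c)
  = 0%nat.
Proof.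
  intros Hc. apply count_between_none. intros t Ht Hin.
  apply in_map_iff in Hin as [d [E Hd]]; apply in_block_list in Hd.
  unfold after_up, addc in E; cbn [dirv fst snd] in E; injection E as E1 E2.
  assert (d = c) as -> by (apply source_index_inj; auto; unfold parking_row in E2; lia).
  lia.
Qed.

Lemma right_move : step obstacles Cr (map after_up block) (map after_right block).
Proof.
  apply step_of_map. intros c Hc; apply in_block_list in Hc.
  exists (target_column (pi c) + 1 - fst c).
  split; [now apply right_first_obstacle|].
  rewrite right_count by exact Hc.
  unfold after_up, after_right, addc; cbn [dirv fst snd]. f_equal; lia.
Qed.

(* Move d: each robot is alone in its target column (pi is injective) and
   drops onto the stopper just below its target cell. *)
Lemma down_first_obstacle c : inQ c ->
  first_obstacle obstacles (after_right c) (dirv Cd) (parking_row c - snd (pi c) + 1).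
Proof.
  intros Hc. pose proof (pi_maps _ Hc) as Hpc.
  pose proof (source_index_bounds _ Hc) as Hsrc. pose proof (target_index_bounds _ Hpc) as Htgt.
  pose proof Hpc as [Hx Hy].
  unfold after_right. split; [unfold parking_row; lia | split].
  - apply in_or_app; right; apply in_or_app; right; apply in_or_app; left.
    unfold down_stops; apply in_map_iff.
    exists (pi c). split; [unfold addc; cbn [dirv fst snd]; f_equal; lia | now apply in_block_list].
  - intros t Ht Hin. apply in_obstacles in Hin; unfold addc in Hin; cbn [dirv fst snd] in Hin.
    destruct Hin as [[i [Hi E]]|[[d [Hd E]]|[[e [He E]]|[[j [Hj E]]|[r [Hr E]]]]]];
      injection E as E1 E2.
    + unfold target_column in E1; lia.
    + unfold target_column in E1; lia.
    + assert (e = pi c) as -> by (apply target_index_inj; auto; unfold target_column in E1; lia).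
      lia.
    + unfold target_column in E1; lia.
    + unfold target_column in E1; lia.
Qed.

Lemma down_count c : inQ c ->
  count_between (map after_right block) (after_right c) (dirv Cd)
    (parking_row c - snd (pi c) + 1) = 0%nat.
Proof.
  intros Hc. apply count_between_none. intros t Ht Hin.
  apply in_map_iff in Hin as [d [E Hd]]; apply in_block_list in Hd.
  unfold after_right, addc in E; cbn [dirv fst snd] in E; injection E as E1 E2.
  assert (pi d = pi c) by
    (apply target_index_inj; auto; unfold target_column in E1; lia).
  assert (d = c) as -> by auto.
  lia.
Qed.

Lemma down_move : step obstacles Cd (map after_right block) (map after_down block).
Proof.
  apply step_of_map. intros c Hc; apply in_block_list in Hc.
  exists (parking_row c - snd (pi c) + 1).
  split; [now apply down_first_obstacle|].
  rewrite down_count by exact Hc.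
  unfold after_right, after_down, addc; cbn [dirv fst snd]. f_equal; lia.
Qed.

(* Move l: in the row of a target e, the robots sit in the target columns of
   the cells of that row, in the order of their x-coordinates, and nothing
   else lies between them and the wall at column a - 1; so they stack against
   the wall in that order and the robot for e ends on e. *)
Lemma left_first_obstacle c : inQ c ->
  first_obstacle obstacles (after_down c) (dirv Cl) (target_column (pi c) - a + 1).
Proof.
  intros Hc. pose proof (pi_maps _ Hc) as Hpc.
  pose proof (target_index_bounds _ Hpc) as Htgt. pose proof Hpc as [Hx Hy].
  assert (0 <= (snd (pi c) - b) * side) by (clear - Hy; nia).
  unfold after_down. split; [unfold target_column, target_index in *; lia | split].
  - apply in_or_app; right; apply in_or_app; right; apply in_or_app; right; apply in_or_app; left.
    unfold left_wall; apply in_map_iff. exists (snd (pi c) - b).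
    split; [unfold addc; cbn [dirv fst snd]; f_equal; lia | apply in_zseq; lia].
  - intros t Ht Hin. apply in_obstacles in Hin; unfold addc in Hin; cbn [dirv fst snd] in Hin.
    destruct Hin as [[i [Hi E]]|[[d [Hd E]]|[[e [He E]]|[[j [Hj E]]|[r [Hr E]]]]]];
      injection E as E1 E2.
    + assert (0 <= (i + 1) * side) by (clear - Hi; nia). lia.
    + pose proof (source_index_bounds _ Hd). unfold parking_row in E2; lia.
    + (* a stopper below the next row lies right of the whole row of pi c *)
      pose proof (target_index_bounds _ He) as [He' _].
      assert (snd e = snd (pi c) + 1) as Hrow by lia. rewrite Hrow in He'.
      replace ((snd (pi c) + 1 - b) * side) with ((snd (pi c) - b) * side + side) in He'
        by ring.
      unfold target_column in E1; lia.
    + lia.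
    + lia.
Qed.

Lemma NoDup_after_down : NoDup (map after_down block).
Proof.
  apply NoDup_map_NoDup_ForallPairs; [|apply NoDup_block_list].
  intros c d Hc Hd E. apply in_block_list in Hc, Hd.
  unfold after_down in E; injection E as E _.
  apply pi_inj; auto. apply target_index_inj; auto. unfold target_column in E; lia.
Qed.

Lemma left_count c : inQ c ->
  count_between (map after_down block) (after_down c) (dirv Cl)
    (target_column (pi c) - a + 1) = Z.to_nat (fst (pi c) - a).
Proof.
  intros Hc. pose proof (pi_maps _ Hc) as Hpc. unfold after_down.
  destruct (pi c) as [x y]; pose proof Hpc as [Hx Hy]; cbn [fst snd] in *.
  assert (0 <= (y - b) * side) by (clear - Hy; nia).
  rewrite <- (length_zseq (Z.to_nat (x - a))), <- (length_map (fun i => 2 * (i + 1))).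
  apply count_between_offsets; [apply NoDup_after_down | |].
  - apply NoDup_map_NoDup_ForallPairs; [intros i i' _ _; lia | apply NoDup_zseq].
  - intros t. rewrite !in_map_iff. unfold addc; cbn [dirv fst snd]. split.
    + intros [i [<- Hi]]. apply in_zseq in Hi.
      destruct (pi_onto (x - 1 - i, y)) as [d [Hd Hpd]]; [unfold in_block; cbn [fst snd]; lia|].
      split; [unfold target_column, target_index; cbn [fst snd]; lia|].
      exists d. split; [|now apply in_block_list].
      unfold after_down; rewrite Hpd; unfold target_column, target_index; cbn [fst snd].
      f_equal; lia.
    + intros [Ht [d [E Hd]]]. apply in_block_list in Hd. pose proof (pi_maps _ Hd) as Hpd.
      unfold after_down in E; destruct (pi d) as [x' y']; destruct Hpd as [Hx' Hy'].
      cbn [fst snd] in *; injection E as E1 ->.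
      unfold target_column, target_index in E1; cbn [fst snd] in E1.
      exists (x - x' - 1). split; [lia | apply in_zseq; lia].
Qed.

Lemma left_move : step obstacles Cl (map after_down block) (map pi block).
Proof.
  apply step_of_map. intros c Hc; apply in_block_list in Hc.
  exists (target_column (pi c) - a + 1).
  split; [now apply left_first_obstacle|].
  rewrite left_count by exact Hc. pose proof (pi_maps _ Hc) as [Hx _].
  unfold after_down, addc; cbn [dirv fst snd].
  destruct (pi c) as [x y]; cbn [fst snd] in *. f_equal; lia.
Qed.

(* Move u moves a robot by at most N cells, the other moves by at most 3N. *)
Lemma total_displacement :
  maxdisp block (map after_up block) + maxdisp (map after_up block) (map after_right block)
  + maxdisp (map after_right block) (map after_down block)
  + maxdisp (map after_down block) (map pi block) <= 10 * area.
Proof.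
  pose proof side_le_area as Harea.
  assert (Hup : maxdisp block (map after_up block) <= area).
  { rewrite <- (map_id block) at 1. apply maxdisp_le; [lia|]; cbv beta.
    intros c Hc; apply in_block_list in Hc. destruct Hc as [Hx _].
    assert (0 <= (fst c - a) * side /\ (fst c - a) * side + side <= area) by (clear - Hx; nia).
    unfold Pilot.Defs.dist, after_up, parking_row, source_index; cbn [fst snd]; lia. }
  assert (Hright : maxdisp (map after_up block) (map after_right block) <= 3 * area).
  { apply maxdisp_le; [lia|]. intros c Hc; apply in_block_list in Hc.
    pose proof (target_index_bounds _ (pi_maps _ Hc)). destruct Hc as [Hx _].
    unfold Pilot.Defs.dist, after_up, after_right, target_column; cbn [fst snd]; lia. }
  assert (Hdown : maxdisp (map after_right block) (map after_down block) <= 3 * area).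
  { apply maxdisp_le; [lia|]. intros c Hc; apply in_block_list in Hc.
    pose proof (source_index_bounds _ Hc). pose proof (pi_maps _ Hc) as [_ Hy].
    unfold Pilot.Defs.dist, after_right, after_down, parking_row; cbn [fst snd]; lia. }
  assert (Hleft : maxdisp (map after_down block) (map pi block) <= 3 * area).
  { rewrite <- (map_id (map pi block)), map_map. apply maxdisp_le; [lia|].
    intros c Hc; apply in_block_list in Hc.
    pose proof (target_index_bounds _ (pi_maps _ Hc)). pose proof (pi_maps _ Hc) as [Hx _].
    unfold Pilot.Defs.dist, after_down, target_column; cbn [fst snd]; lia. }
  lia.
Qed.

End Construction.

Theorem theorem1 (n : nat) (a b : Z) (pi : cell -> cell) :
  (1 <= n)%nat ->
  (forall c, in_block a b n c -> in_block a b n (pi c)) ->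
  (forall c c', in_block a b n c -> in_block a b n c' -> pi c = pi c' -> c = c') ->
  (forall c', in_block a b n c' -> exists c, in_block a b n c /\ pi c = c') ->
  let N := (n * n)%nat in
  exists O : list cell,
    NoDup O /\ length O = (4 * N + 1)%nat /\
    (exists x0 y0 : Z, forall c,
        (In c O \/ in_block a b n c) -> in_square x0 y0 (3 * Z.of_nat N) c) /\
    (forall c, in_block a b n c -> ~ In c O) /\
    let c0 := block_list a b n in
    exists c1 c2 c3 c4 : list cell,
      step O Cu c0 c1 /\ step O Cr c1 c2 /\ step O Cd c2 c3 /\ step O Cl c3 c4 /\
      (forall i, (i < length c0)%nat -> nth i c4 (0, 0) = pi (nth i c0 (0, 0))) /\
      (forall v : R, (0 < v)%R ->
         (move_time v c0 c1 + move_time v c1 c2 + move_time v c2 c3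
          + move_time v c3 c4 <= 10 * INR N / v)%R).
Proof.
  intros Hn Hmaps Hinj Honto N.
  assert (HN : Z.of_nat N = Z.of_nat n * Z.of_nat n) by (unfold N; lia).
  pose proof (side_le_area n Hn) as Harea.
  exists (obstacles a b n pi).
  split; [now apply NoDup_obstacles|].
  split; [now apply length_obstacles|].
  split.
  { exists (a - 1), (b + Z.of_nat n - 2 * Z.of_nat N).
    intros c [Hc|[Hx Hy]]; unfold in_square; rewrite HN; [|lia].
    pose proof (obstacle_region a b n pi Hn Hmaps c Hc); lia. }
  split; [intros c Hc Hin; now apply (obstacle_region a b n pi Hn Hmaps c Hin)|].
  intros c0.
  exists (map (after_up a b n) c0), (map (after_right a b n pi) c0),
         (map (after_down a b n pi) c0), (map pi c0).
  split; [now apply up_move|].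
  split; [now apply right_move|].
  split; [now apply down_move|].
  split; [now apply left_move|].
  split.
  { intros i Hi. rewrite (nth_indep _ _ (pi (0, 0))) by now rewrite length_map.
    apply map_nth. }
  intros v Hv.
  replace (10 * INR N)%R with (IZR (10 * Z.of_nat N))
    by now rewrite mult_IZR, <- INR_IZR_INZ.
  apply move_times_le; [exact Hv|]. rewrite HN. now apply total_displacement.
Qed.
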